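(* Let $G$ be a finite, connected game board in which every edge is marked with an arrow and there are no sinks and no sources. Then $G$ contains a cycle cell.
   Context: A board is a simple connected planar graph embedded in the plane, together with its bounded cells (bounded faces). An edge marked with an arrow is oriented in one of its two directions. A sink is a vertex all of whose incident edges are marked with arrows pointing toward it; a source is a vertex all of whose incident edges are marked with arrows pointing away from it. A cycle cell is a bounded cell all of whose boundary edges are marked with arrows all cycling in the same direction (all clockwise or all counterclockwise) around that cell. *)

(* A board (connected simple plane graph) is encoded as a
   combinatorial map (rotation system) of genus 0 with a distinguished outer face. *)
From mathcomp Require Import all_boot.
Set Implicit Arguments. Unset Strict Implicit. Unset Printing Implicit Defensive.

Section Board.
Variables (D : finType) (alpha sigma : D -> D).
(* D : darts (half-edges); alpha : reversal of a dart; sigma : rotation of the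
   darts around their tail vertex (counterclockwise order of the embedding).
   Vertices = sigma-orbits, edges = alpha-orbits, faces = phi-orbits. *)

Definition face_perm (d : D) : D := sigma (alpha d).

Definition map_adj : rel D := fun x y => (y == sigma x) || (y == alpha x).

Definition is_plane_simple_map : Prop :=
  [/\ injective sigma, involutive alpha & (forall d, alpha d != d)] /\
  [/\
      (* no loops: a dart and its reverse start at different vertices *)
      (forall d, ~~ fconnect sigma d (alpha d)),
      (* no multiple edges *)
      (forall d e, fconnect sigma d e -> fconnect sigma (alpha d) (alpha e) -> d = e),
      (forall d e, connect map_adj d e)
    & (* planar: Euler's formula V - E + F = 2 *)
      fcard sigma D + fcard face_perm D = fcard alpha D + 2].

Variable (orient : D -> bool).
(* orient d = true : the arrow on the edge of d points from the tail of d to its head. *)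
Definition is_orientation : Prop := forall d, orient (alpha d) = ~~ orient d.

Definition is_sink (d : D) : bool := [forall e, fconnect sigma d e ==> ~~ orient e].
Definition is_source (d : D) : bool := [forall e, fconnect sigma d e ==> orient e].

(* The face containing d (traversed as the closed boundary walk d, phi d, ...)
   is bounded when it is not the outer face (the face of dart outer). *)
Definition bounded_cell (outer d : D) : bool := ~~ fconnect face_perm outer d.

Definition cycle_cell (outer d : D) : bool :=
  bounded_cell outer d &&
  ([forall e, fconnect face_perm d e ==> orient e] ||
   [forall e, fconnect face_perm d e ==> ~~ orient e]).

End Board.

From mathcomp Require Import all_boot zify.
Set Implicit Arguments. Unset Strict Implicit. Unset Printing Implicit Defensive.

(* Call a dart x a switch of a permutation p if orient x != orient (p x).  A
   non-monochrome orbit of p contains at least two switches.  With no sinks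
   and no sources every vertex (sigma-orbit) is non-monochrome, and if there
   were no cycle cell every bounded face (phi-orbit) would be too; so there
   are at least 2V sigma-switches and 2(F - 1) phi-switches.  Since
   phi (alpha x) = sigma x and alpha reverses orientations, alpha x is a
   phi-switch exactly when x is not a sigma-switch, so the two counts add up
   to #|D| = 2E.  Hence V + F - 1 <= E, contradicting Euler's formula. *)

Section Switches.
Variables (D : finType) (p : D -> D) (b : D -> bool).
Hypothesis injp : injective p.

Definition switches : nat := \sum_(x : D) (b x != b (p x)).

Definition monochrome_orbit (x : D) : bool :=
  [forall e, fconnect p x e ==> b e] || [forall e, fconnect p x e ==> ~~ b e].

Lemma iter_switch n u :
  b u != b (iter n p u) -> exists z, [/\ fconnect p u z, b z = b u & b (p z) != b u].
Proof.
elim: n u => [|n IHn] u; first by rewrite eqxx.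
rewrite iterSr; have [/eqP bpu | nbpu] := boolP (b (p u) == b u); last first.
  by exists u; split.
rewrite -bpu => /IHn [z [puz bz bpz]]; exists z; split => //.
exact: connect_trans (fconnect1 p u) puz.
Qed.

Lemma fconnect_switch u v :
  fconnect p u v -> b u != b v ->
  exists z, [/\ fconnect p u z, b z = b u & b (p z) != b u].
Proof. by move=> uv buv; apply: (@iter_switch (findex p u v)); rewrite iter_findex. Qed.

Lemma nonmonochrome_orbit_switches x :
  ~~ monochrome_orbit x -> 1 < #|[pred z | fconnect p x z && (b z != b (p z))]|.
Proof.
rewrite negb_or !negb_forall => /andP[/existsP[u] + /existsP[v]].
rewrite negb_imply => /andP[xu bu]; rewrite negb_imply negbK => /andP[xv bv].
have uv : fconnect p u v by rewrite (connect_trans _ xv) // fconnect_sym.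
have vu : fconnect p v u by rewrite fconnect_sym.
have [|zu [uzu bzu szu]] := fconnect_switch uv; first by rewrite (negbTE bu) bv.
have [|zv [vzv bzv szv]] := fconnect_switch vu; first by rewrite (negbTE bu) bv.
have neq_z : zu != zv by apply/eqP => ezz; move: bu; rewrite -bzu ezz bzv bv.
rewrite (cardD1 zu) (cardD1 zv) !inE (eq_sym zv) neq_z (connect_trans xu uzu).
by rewrite (connect_trans xv vzv) bzu bzv (eq_sym (b u)) (eq_sym (b v)) szu szv.
Qed.

Lemma leq_roots_switches (P : pred D) :
  (forall r, r \in froots p -> P r -> ~~ monochrome_orbit r) ->
  2 * #|[pred r in froots p | P r]| <= switches.
Proof.
move=> nonmono; have symp := fconnect_sym injp.
rewrite /switches (partition_big (froot p) (mem (froots p))) /=; last first.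
  by move=> x _; exact: roots_root.
rewrite mulnC -sum_nat_const [X in _ <= X](bigID P) /= -[X in X <= _]addn0 leq_add //.
apply: leq_sum => r /andP[rootr Pr].
apply: leq_trans (nonmonochrome_orbit_switches (nonmono r rootr Pr)) _.
rewrite -sum1_card big_mkcond /= [X in _ <= X]big_mkcond /=; apply: leq_sum => z _.
rewrite inE -(root_connect symp) (eq_sym (froot p r)) (eqP rootr).
by case: (_ == _); case: (b z != _).
Qed.

Lemma fcard_roots_off_orbit x :
  fcard p D = #|[pred r in froots p | ~~ fconnect p x r]|.+1.
Proof.
have symp := fconnect_sym injp.
rewrite /n_comp_mem (cardD1 (froot p x)) !inE roots_root //= add1n; congr _.+1.
apply: eq_card => r; rewrite !inE andbT andbC; apply: andb_id2l => /eqP rootr.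
by rewrite -{1}rootr (root_connect symp) symp.
Qed.

End Switches.

Lemma fcard_fixfree_involution (D : finType) (alpha : D -> D) :
  involutive alpha -> (forall d, alpha d != d) -> fcard alpha D * 2 = #|D|.
Proof.
move=> invA nfix; have injA := inv_inj invA.
apply: (fcard_order_set injA); last by move=> x y _.
apply/subsetP => x _; rewrite inE; have := card2 x (alpha x).
rewrite eq_sym nfix => <-; apply/eqP/eq_card => y; rewrite !inE.
apply/idP/idP => [|/orP[]/eqP->//].
- move=> /iter_findex <-; elim: (findex _ _ _) => [|n IHn] /=; first by rewrite eqxx.
  by case/orP: IHn => /eqP->; rewrite ?invA eqxx ?orbT.
- exact: fconnect1.
Qed.

Lemma switches_add_face_perm (D : finType) (alpha sigma : D -> D) (orient : D -> bool) :
  involutive alpha -> is_orientation alpha orient ->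
  switches sigma orient + switches (face_perm alpha sigma) orient = #|D|.
Proof.
move=> invA orientA; rewrite /switches [X in _ + X](reindex_inj (inv_inj invA)) /=.
rewrite -big_split -sum1_card /=; apply: eq_bigr => x _; rewrite /face_perm invA orientA.
by case: (orient x); case: (orient (sigma x)).
Qed.

Theorem theorem6p1 (D : finType) (alpha sigma : D -> D) (outer : D)
    (orient : D -> bool) :
  is_plane_simple_map alpha sigma ->
  is_orientation alpha orient ->
  (forall d, ~~ is_sink sigma orient d) ->
  (forall d, ~~ is_source sigma orient d) ->
  exists d, cycle_cell alpha sigma orient outer d.
Proof.
move=> [[injs invA nfix] [_ _ _ euler]] orientA nsink nsrc.
have [d cell_d | no_cell] := pickP (cycle_cell alpha sigma orient outer); first by exists d.
exfalso; set phi := face_perm alpha sigma in euler *.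
have injphi : injective phi := inj_comp injs (inv_inj invA).
have vertices : 2 * fcard sigma D <= switches sigma orient.
  have -> : fcard sigma D = #|[pred r in froots sigma | predT r]|.
    by apply: eq_card => r; rewrite !inE andbT.
  apply: leq_roots_switches => // r _ _.
  by apply/norP; split; [exact: nsrc | exact: nsink].
have faces : 2 * (fcard phi D).-1 <= switches phi orient.
  rewrite (fcard_roots_off_orbit injphi outer).
  apply: leq_roots_switches => // r _ bounded.
  by move: (no_cell r); rewrite /cycle_cell /bounded_cell -/phi bounded => /negbT.
have := switches_add_face_perm sigma invA orientA; rewrite -/phi.
have := fcard_fixfree_involution invA nfix.
lia.
Qed.
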